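(* For $\varepsilon>0$ let $q_\varepsilon=\frac1\varepsilon\delta(t-\frac12-2\varepsilon)$. For every $n_0\in\mathbb N$ there exists $\varepsilon_0>0$ such that $$G^a_{4n-2}(q_\varepsilon)=G^0_{4n-2}(q_\varepsilon)\ne\emptyset\quad\text{for all }(a,\varepsilon,n)\in\mathbb R\times(0,\varepsilon_0)\times\{1,\dots,n_0\}.$$
   Context: Fix an integer $N\ge1$. The potential $q_\varepsilon$ is a $\delta$-interaction of strength $1/\varepsilon$ at $t_0=\frac12+2\varepsilon\in(0,1)$. That is, $-y''+q_\varepsilon y=\lambda y$ means $-y''=\lambda y$ on $[0,1]\setminus\{t_0\}$, with $y$ continuous at $t_0$ and $y'(t_0+)-y'(t_0-)=\frac1\varepsilon y(t_0)$. Hill-equation data. For $\lambda\in\mathbb C$, let $\vartheta,\varphi$ solve this equation with $\vartheta(0)=\varphi'(0)=1$ and $\vartheta'(0)=\varphi(0)=0$. Put $F=(\varphi'(1,\cdot)+\vartheta(1,\cdot))/2$ and $F_-=(\varphi'(1,\cdot)-\vartheta(1,\cdot))/2$. Operators. Let $a=a_1'+a_2'$ with $a_1',a_2'\in\mathbb R$, let $s=e^{2\pi i/N}$, and for $k\in\mathbb Z_N$ set $c_k=\cos(\pi k/N+a)$ and $s_k=\sin(\pi k/N+a)$. $H_k^a$ acts in $L^2(\Gamma^1)$, where $\Gamma^1$ has edges $\Gamma_{n,j}$, $(n,j)\in\mathbb Z\times\{1,\dots,6\}$, each identified with $[0,1]$, by $-f''_{n,j}+q_\varepsilon f_{n,j}$,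 with boundary conditions for all $n$: - $e^{ia_1'}f_{n,1}(1)=f_{n,2}(0)=f_{n,5}(0)$; - $e^{ia_2'}f_{n,2}(1)=f_{n,3}(0)=f_{n,6}(0)$; - $e^{ia_1'}f_{n,3}(1)=f_{n,4}(0)=e^{ia_1'}f_{n-1,6}(1)$; - $e^{ia_2'}s^kf_{n,4}(1)=f_{n,1}(0)=e^{-ia_1'}f_{n-1,5}(1)$; - $e^{ia_1'}f'_{n,1}(1)=f'_{n,2}(0)+f'_{n,5}(0)$; - $e^{ia_2'}f'_{n,2}(1)=f'_{n,3}(0)+f'_{n,6}(0)$; - $e^{ia_1'}f'_{n,3}(1)+e^{ia_1'}f'_{n-1,6}(1)=f'_{n,4}(0)$; - $e^{ia_2'}s^kf'_{n,4}(1)+e^{-ia_1'}f'_{n-1,5}(1)=f'_{n,1}(0)$. $H^a=\bigoplus_kH_k^a$. Lyapunov functions. $F_{k,\nu}=\xi_k-(-1)^\nu\sqrt{\rho_k}$, with $\xi_k=\frac{9F^2-F_-^2-1}2-s_k^2$ and $\rho_k=(9F^2-s_k^2)c_k^2+s_k^2F_-^2$. Set $D_k^\pm=4(F_{k,1}\mp1)(F_{k,2}\mp1)$. Antiperiodic eigenvalues. The zeros of $D_0^-$ at $a=0$ are labeled $\lambda^{0,-}_{2,1}\le\lambda^{0,-}_{1,1}\le\lambda^{0,+}_{1,1}\le\lambda^{0,+}_{2,1}\le\lambda^{0,-}_{2,3}\le\cdots$. Set $\varkappa_n=(\lambda^{0,-}_{1,2n-1},\lambda^{0,+}_{1,2n-1})$.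 Let $r^\mp_{k,n}$ be the smallest/largest zero of $\rho_k$ in $\overline{\varkappa_n}$, and $v_k=|F_-|-c_k^2$. Gaps. $E^{k,\pm}_{1,2n-1}=\lambda^{0,\pm}_{1,2n-1}$ if $v_k(\lambda^{0,\pm}_{1,2n-1})\ge0$, and $E^{k,\pm}_{1,2n-1}=r^\pm_{k,n}$ otherwise. Define $G^a_{4n-2}=\bigcap_{k\in\mathbb Z_N}(E^{k,-}_{1,2n-1},E^{k,+}_{1,2n-1})$, the gaps of $\sigma_{ac}(H^a)$ inside $\varkappa_n$. The notation $G^a_{4n-2}(q_\varepsilon)$ indicates the potential used. *)

From Stdlib Require Import Reals Lra.
Open Scope R_scope.

(* Fundamental solutions of -y'' = l y (free equation) at point x:
   cf l x = cos(sqrt l x),  sf l x = sin(sqrt l x)/sqrt l (real l, with the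
   hyperbolic / polynomial continuation for l <= 0). *)
Definition cf (l x : R) : R :=
  if Rle_dec 0 l then cos (sqrt l * x) else cosh (sqrt (- l) * x).
Definition sf (l x : R) : R :=
  if Rlt_dec 0 l then sin (sqrt l * x) / sqrt l
  else if Rlt_dec l 0 then sinh (sqrt (- l) * x) / sqrt (- l)
  else x.

Definition t0 (eps : R) : R := / 2 + 2 * eps.

(* vartheta(1), vartheta'(1), varphi(1), varphi'(1) for q_eps = (1/eps) delta(t - t0):
   the solution is the free one on [0,t0], and on [t0,1] it is the free one plus
   (1/eps) y(t0) sf(t - t0) (continuity + derivative jump (1/eps) y(t0)). *)
Definition theta1 (eps l : R) : R :=
  cf l 1 + / eps * cf l (t0 eps) * sf l (1 - t0 eps).
Definition theta1' (eps l : R) : R :=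
  - l * sf l 1 + / eps * cf l (t0 eps) * cf l (1 - t0 eps).
Definition phi1 (eps l : R) : R :=
  sf l 1 + / eps * sf l (t0 eps) * sf l (1 - t0 eps).
Definition phi1' (eps l : R) : R :=
  cf l 1 + / eps * sf l (t0 eps) * cf l (1 - t0 eps).

Definition Fh (eps l : R) : R := (phi1' eps l + theta1 eps l) / 2.
Definition Fm (eps l : R) : R := (phi1' eps l - theta1 eps l) / 2.

(* c_k, s_k for k in Z_N, represented by k : nat with k < N *)
Definition ck (N : nat) (a : R) (k : nat) : R := cos (PI * INR k / INR N + a).
Definition sk (N : nat) (a : R) (k : nat) : R := sin (PI * INR k / INR N + a).

Definition xi (N : nat) (a : R) (k : nat) (eps l : R) : R :=
  (9 * (Fh eps l)^2 - (Fm eps l)^2 - 1) / 2 - (sk N a k)^2.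
Definition rho (N : nat) (a : R) (k : nat) (eps l : R) : R :=
  (9 * (Fh eps l)^2 - (sk N a k)^2) * (ck N a k)^2 + (sk N a k)^2 * (Fm eps l)^2.

(* D_k^- = 4 (F_{k,1} + 1)(F_{k,2} + 1) with F_{k,nu} = xi_k -(-1)^nu sqrt(rho_k);
   the product of the two conjugate factors is (xi_k + 1)^2 - rho_k. *)
Definition Dm_minus (N : nat) (a : R) (k : nat) (eps l : R) : R :=
  4 * ((xi N a k eps l + 1)^2 - rho N a k eps l).

Definition vk (N : nat) (a : R) (k : nat) (eps l : R) : R :=
  Rabs (Fm eps l) - (ck N a k)^2.

Definition zero_mult (f : R -> R) (x : R) (m : nat) : Prop :=
  exists g : R -> R, continuity g /\ (forall y, f y = (y - x)^m * g y) /\ g x <> 0.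

(* mu lists the (real) zeros of f in nondecreasing order, counted with multiplicity *)
Definition enum_zeros (f : R -> R) (mu : nat -> R) : Prop :=
  (forall i j, (i <= j)%nat -> mu i <= mu j) /\
  (forall x m, zero_mult f x m <->
     exists j0, forall j, mu j = x <-> (j0 <= j /\ j < j0 + m)%nat).

(* labelling mu_0 <= mu_1 <= ... = lambda^{0,-}_{2,1} <= lambda^{0,-}_{1,1} <=
   lambda^{0,+}_{1,1} <= lambda^{0,+}_{2,1} <= lambda^{0,-}_{2,3} <= ... ;
   for n >= 1: *)
Definition lam_minus (mu : nat -> R) (n : nat) : R := mu (4 * (n - 1) + 1)%nat.
Definition lam_plus (mu : nat -> R) (n : nat) : R := mu (4 * (n - 1) + 2)%nat.

Definition is_min_zero (f : R -> R) (lo hi r : R) : Prop :=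
  lo <= r <= hi /\ f r = 0 /\ (forall y, lo <= y <= hi -> f y = 0 -> r <= y).
Definition is_max_zero (f : R -> R) (lo hi r : R) : Prop :=
  lo <= r <= hi /\ f r = 0 /\ (forall y, lo <= y <= hi -> f y = 0 -> y <= r).

Definition Eminus (N : nat) (a : R) (k : nat) (eps : R) (mu : nat -> R) (n : nat)
  (e : R) : Prop :=
  let lm := lam_minus mu n in let lp := lam_plus mu n in
  (0 <= vk N a k eps lm /\ e = lm) \/
  (vk N a k eps lm < 0 /\ is_min_zero (rho N a k eps) lm lp e).

Definition Eplus (N : nat) (a : R) (k : nat) (eps : R) (mu : nat -> R) (n : nat)
  (e : R) : Prop :=
  let lm := lam_minus mu n in let lp := lam_plus mu n in
  (0 <= vk N a k eps lp /\ e = lp) \/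
  (vk N a k eps lp < 0 /\ is_max_zero (rho N a k eps) lm lp e).

Definition in_gap (N : nat) (a eps : R) (mu : nat -> R) (n : nat) (lam : R) : Prop :=
  forall k : nat, (k < N)%nat ->
    exists em ep, Eminus N a k eps mu n em /\ Eplus N a k eps mu n ep /\
                  em < lam < ep.

From Pilot Require Import Defs.
From Stdlib Require Import Reals Lra Lia List Classical ClassicalEpsilon.
From Coquelicot Require Import Coquelicot.
Import ListNotations.
Open Scope R_scope.

(* At a = 0, D_0^- factors into the four functions 3F - s1 - s2 F_- (s1, s2 = +-1),
   and at lambda = k^2 each factor equals Q_{s1,s2}(k) / k for an explicit trigonometric
   function Q.  For small eps, F_- = sin(4 eps k) / (2 eps k) > 1 on a fixed range of k,
   so there the zeros of the four factors are distinct and simple, while the sign of Q at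
   the points n pi + pi/2 gives each factor a zero in every window between two such points.
   Hence the first 4 n0 zeros of D_0^- are simple, lambda^{0,-}_{1,2n-1} < lambda^{0,+}_{1,2n-1},
   and |F_-| >= 1 >= c_k^2 at both of them, so v_k >= 0 and E^{k,+-}_{1,2n-1} is the
   antiperiodic eigenvalue itself for every k and every a: the gap is the nonempty interval
   between them.  Enumerating all zeros with multiplicity only needs every zero to have
   finite order, which holds because a linear relation among the derivatives of Q shows
   that they cannot all vanish at one point. *)

Lemma continuity_pt_eps (h : R -> R) x : continuity_pt h x ->
  forall e, 0 < e -> exists d, 0 < d /\ forall y, Rabs (y - x) < d -> Rabs (h y - h x) < e.
Proof.
  intros Hh e He. destruct (Hh e He) as [d [Hd Hy]]. exists d. split; auto.
  intros y Hyx. destruct (Req_dec y x) as [->|Hne].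
  - unfold Rminus. rewrite Rplus_opp_r, Rabs_R0. exact He.
  - apply Hy. split; [split; [exact I | auto] | exact Hyx].
Qed.

Lemma continuity_pt_of_eps (h : R -> R) x :
  (forall e, 0 < e -> exists d, 0 < d /\ forall y, Rabs (y - x) < d -> Rabs (h y - h x) < e) ->
  continuity_pt h x.
Proof.
  intros H e He. destruct (H e He) as [d [Hd Hy]]. exists d. split; auto.
  intros y [_ Hyx]. apply Hy, Hyx.
Qed.

Lemma continuity_pt_zero_off (h : R -> R) x : continuity_pt h x ->
  (forall y, y <> x -> h y = 0) -> h x = 0.
Proof.
  intros Hc Hz. apply NNPP. intro Hx.
  destruct (continuity_pt_eps h x Hc (Rabs (h x)) (Rabs_pos_lt _ Hx)) as [d [Hd H]].
  specialize (H (x + d / 2)). rewrite Hz in H by lra.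
  replace (x + d / 2 - x) with (d / 2) in H by ring.
  rewrite Rabs_right, Rabs_minus_sym, Rminus_0_r in H; lra.
Qed.

Lemma continuity_pt_nonzero_near (f : R -> R) x : continuity_pt f x -> f x <> 0 ->
  exists d, 0 < d /\ forall y, Rabs (y - x) < d -> f y <> 0.
Proof.
  intros Hc Hx.
  destruct (continuity_pt_eps f x Hc (Rabs (f x)) (Rabs_pos_lt _ Hx)) as [d [Hd H]].
  exists d. split; auto. intros y Hy Hfy. specialize (H y Hy).
  rewrite Hfy, Rminus_0_l, Rabs_Ropp in H. lra.
Qed.

Lemma continuity_cst (c : R) : continuity (fun _ : R => c).
Proof. apply continuity_const. intros a b; reflexivity. Qed.

Lemma continuity_pt_pow (h : R -> R) n x : continuity_pt h x ->
  continuity_pt (fun y => h y ^ n) x.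
Proof.
  intro H. induction n; simpl.
  - apply continuity_cst.
  - apply continuity_pt_mult; auto.
Qed.

Lemma continuity_pow_shift x n : continuity (fun y => (y - x) ^ n).
Proof.
  intro y. apply continuity_pt_pow, continuity_pt_minus.
  - apply derivable_continuous_pt, derivable_pt_id.
  - apply continuity_cst.
Qed.

Lemma continuity_sqrt : continuity sqrt.
Proof.
  intro x. destruct (Rle_dec 0 x). { apply continuity_pt_sqrt; auto. }
  apply (continuity_pt_locally_ext (fun _ => 0) sqrt (- x) x); [lra| |apply continuity_cst].
  intros y Hy. unfold Rdist in Hy. apply Rabs_def2 in Hy. symmetry. apply sqrt_neg_0. lra.
Qed.

Lemma continuity_glue (f h1 h2 : R -> R) a : (forall y, a <= y -> f y = h1 y) ->
  (forall y, y <= a -> f y = h2 y) -> continuity h1 -> continuity h2 -> continuity f.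
Proof.
  intros H1 H2 C1 C2 x. destruct (Rtotal_order x a) as [L|[->|L]].
  - apply (continuity_pt_locally_ext h2 f (a - x) x); [lra| |auto].
    intros y Hy. unfold Rdist in Hy. apply Rabs_def2 in Hy. symmetry. apply H2. lra.
  - apply continuity_pt_of_eps. intros e He.
    destruct (continuity_pt_eps h1 a (C1 a) e He) as [d1 [Hd1 K1]].
    destruct (continuity_pt_eps h2 a (C2 a) e He) as [d2 [Hd2 K2]].
    exists (Rmin d1 d2). split; [apply Rmin_pos; auto|]. intros y Hy.
    pose proof (Rmin_l d1 d2). pose proof (Rmin_r d1 d2).
    destruct (Rle_dec a y).
    + rewrite (H1 y), (H1 a) by lra. apply K1. lra.
    + rewrite (H2 y), (H2 a) by lra. apply K2. lra.
  - apply (continuity_pt_locally_ext h1 f (x - a) x); [lra| |auto].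
    intros y Hy. unfold Rdist in Hy. apply Rabs_def2 in Hy. symmetry. apply H1. lra.
Qed.

Lemma zero_mult_root_pos f x m : zero_mult f x m -> f x = 0 -> (1 <= m)%nat.
Proof.
  intros [g [_ [Hf Hx]]] H0. destruct m; [|lia].
  rewrite Hf in H0. simpl in H0. lra.
Qed.

Lemma zero_mult_root f x m : zero_mult f x m -> (1 <= m)%nat -> f x = 0.
Proof.
  intros [g [_ [Hf _]]] Hm. rewrite Hf, Rminus_diag, pow_i by lia. ring.
Qed.

Lemma zero_mult_nonroot f x : continuity f -> f x <> 0 -> zero_mult f x 0.
Proof. intros Hc Hx. exists f. repeat split; auto. intro y. simpl. ring. Qed.

Lemma zero_mult_unique f x m m' : zero_mult f x m -> zero_mult f x m' -> m = m'.
Proof.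
  assert (Hlt : forall a b, (a < b)%nat -> zero_mult f x a -> zero_mult f x b -> False).
  { intros a b Hab [g [Hg [Hf Hx]]] [g' [Hg' [Hf' _]]].
    (* off x, (y - x)^a g y = (y - x)^b g' y, so g y = (y - x)^(b-a) g' y also at x *)
    set (h := fun y => g y - (y - x) ^ (b - a) * g' y).
    assert (Hz : forall y, y <> x -> h y = 0).
    { intros y Hy. apply (Rmult_eq_reg_l ((y - x) ^ a)); [|apply pow_nonzero; lra].
      unfold h. rewrite Rmult_0_r, Rmult_minus_distr_l, <- Rmult_assoc, <- pow_add.
      replace (a + (b - a))%nat with b by lia. rewrite <- Hf, <- Hf'. ring. }
    assert (Hc : continuity_pt h x).
    { apply continuity_pt_minus, continuity_pt_mult; auto. apply continuity_pow_shift. }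
    pose proof (continuity_pt_zero_off h x Hc Hz) as H. unfold h in H.
    rewrite Rminus_diag, pow_i in H by lia. apply Hx. lra. }
  intros H1 H2. destruct (Nat.lt_trichotomy m m') as [L|[L|L]]; auto; exfalso; eauto.
Qed.

Lemma zero_mult_isolated f x m : zero_mult f x m ->
  exists d, 0 < d /\ forall y, 0 < Rabs (y - x) < d -> f y <> 0.
Proof.
  intros [g [Hg [Hf Hx]]].
  destruct (continuity_pt_nonzero_near g x (Hg x) Hx) as [d [Hd H]].
  exists d. split; auto. intros y [Hy1 Hy2]. rewrite Hf.
  apply Rmult_integral_contrapositive. split; auto.
  apply pow_nonzero. intro E. rewrite E, Rabs_R0 in Hy1. lra.
Qed.

Lemma zero_mult_mul (f g : R -> R) x a b : zero_mult f x a -> zero_mult g x b ->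
  zero_mult (fun y => f y * g y) x (a + b).
Proof.
  intros [F [HF [Hf HFx]]] [G [HG [Hg HGx]]]. exists (fun y => F y * G y).
  repeat split.
  - apply continuity_mult; auto.
  - intro y. rewrite Hf, Hg, pow_add. ring.
  - apply Rmult_integral_contrapositive; auto.
Qed.

Lemma continuity_pt_of_is_derive (f : R -> R) x l : is_derive f x l -> continuity_pt f x.
Proof.
  intro H. apply continuity_pt_filterlim.
  apply (ex_derive_continuous (K := R_AbsRing) (V := R_NormedModule) f x). exists l; auto.
Qed.

Lemma is_derive_taylor_term (g : R -> R) dg c x0 m t : is_derive g t dg ->
  is_derive (fun t => g t - c / INR (Factorial.fact (S m)) * (t - x0) ^ S m) t
    (dg - c / INR (Factorial.fact m) * (t - x0) ^ m).
Proof.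
  intro Hg. apply (is_derive_minus g); auto.
  replace (c / INR (Factorial.fact m) * (t - x0) ^ m)
    with (c / INR (Factorial.fact (S m)) * (INR (S m) * 1 * (t - x0) ^ m)).
  - apply is_derive_scal, (is_derive_pow (fun t => t - x0)). auto_derive; auto; ring.
  - rewrite fact_simpl, mult_INR. field.
    split; [apply INR_fact_neq_0 | apply not_0_INR; lia].
Qed.

Lemma derivative_chain_taylor (f : nat -> R -> R) x0 :
  (forall j x, is_derive (f j) x (f (S j) x)) ->
  forall m, (forall j, (j < m)%nat -> f j x0 = 0) ->
  forall e, 0 < e -> exists d, 0 < d /\ forall x, Rabs (x - x0) < d ->
    Rabs (f O x - f m x0 / INR (Factorial.fact m) * (x - x0) ^ m) <= e * Rabs (x - x0) ^ m.
Proof.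
  intros Hd m. revert f Hd. induction m as [|m IH]; intros f Hd Hz e He.
  - destruct (continuity_pt_eps (f O) x0 (continuity_pt_of_is_derive _ _ _ (Hd O x0)) e He)
      as [d [Hd0 H]].
    exists d. split; auto. intros x Hx. simpl.
    replace (f O x - f O x0 / 1 * 1) with (f O x - f O x0) by field.
    rewrite Rmult_1_r. left. auto.
  - destruct (IH (fun j => f (S j)) (fun j x => Hd (S j) x)) with (e := e) as [d [Hd0 H]];
      auto.
    { intros j Hj. apply Hz. lia. }
    exists d. split; auto. intros x Hx.
    destruct (MVT_cor4 _ _ x0 (Rabs (x - x0))
      (fun c _ => is_derive_taylor_term _ _ (f (S m) x0) x0 m c (Hd O c)) x (Rle_refl _))
      as [c [Hm Hc]].
    rewrite (Hz O), Rminus_diag, pow_i, Rmult_0_r, !Rminus_0_r in Hm by lia.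
    rewrite Hm, Rabs_mult. simpl pow.
    rewrite (Rmult_comm (Rabs (x - x0))), <- Rmult_assoc.
    apply Rmult_le_compat_r; [apply Rabs_pos|].
    eapply Rle_trans; [apply H; lra|]. apply Rmult_le_compat_l; [lra|].
    apply pow_incr. split; auto. apply Rabs_pos.
Qed.

(* The cofactor is f y / (y - x0)^m off x0, extended by its limit L at x0. *)
Lemma zero_mult_of_limit (f : R -> R) x0 m L : continuity f -> L <> 0 -> f x0 = 0 ^ m * L ->
  (forall e, 0 < e -> exists d, 0 < d /\ forall y, y <> x0 -> Rabs (y - x0) < d ->
     Rabs (f y / (y - x0) ^ m - L) < e) ->
  zero_mult f x0 m.
Proof.
  intros Hf HL Hx0 Hlim.
  set (G := fun y => if Req_EM_T y x0 then L else f y / (y - x0) ^ m).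
  exists G. split; [|split].
  - intro x. destruct (Req_dec x x0) as [->|Hne].
    + apply continuity_pt_of_eps. intros e He. destruct (Hlim e He) as [d [Hd H]].
      exists d. split; auto. intros y Hy. unfold G.
      destruct (Req_EM_T x0 x0) as [_|]; [|congruence].
      destruct (Req_EM_T y x0) as [->|ny]; auto. rewrite Rminus_diag, Rabs_R0. auto.
    + apply (continuity_pt_locally_ext (fun y => f y / (y - x0) ^ m) G (Rabs (x - x0)) x).
      * apply Rabs_pos_lt. lra.
      * intros y Hy. unfold G, Rdist in *. destruct (Req_EM_T y x0) as [->|]; auto.
        rewrite Rabs_minus_sym in Hy. lra.
      * apply continuity_pt_div; [apply Hf | apply continuity_pow_shift | apply pow_nonzero; lra].
  - intro y. unfold G. destruct (Req_EM_T y x0) as [->|ny].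
    + rewrite Rminus_diag. exact Hx0.
    + field. apply pow_nonzero. lra.
  - unfold G. destruct (Req_EM_T x0 x0); [auto|congruence].
Qed.

Lemma zero_mult_of_derivatives (f : nat -> R -> R) x0 m :
  (forall j x, is_derive (f j) x (f (S j) x)) ->
  (forall j, (j < m)%nat -> f j x0 = 0) -> f m x0 <> 0 ->
  zero_mult (f O) x0 m.
Proof.
  intros Hd Hz Hm. set (L := f m x0 / INR (Factorial.fact m)).
  apply (zero_mult_of_limit _ _ _ L).
  - intro x. apply (continuity_pt_of_is_derive _ _ _ (Hd O x)).
  - unfold L, Rdiv. apply Rmult_integral_contrapositive.
    split; auto. apply Rinv_neq_0_compat, INR_fact_neq_0.
  - destruct m as [|m].
    + unfold L. simpl. field.
    + rewrite Hz by lia. rewrite pow_i by lia. ring.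
  - intros e He.
    destruct (derivative_chain_taylor f x0 Hd m Hz (e / 2) ltac:(lra)) as [d [Hd0 H]].
    exists d. split; auto. intros y ny Hy.
    specialize (H y Hy). fold L in H.
    assert (Hp : 0 < Rabs (y - x0) ^ m) by (apply pow_lt, Rabs_pos_lt; lra).
    replace (f O y / (y - x0) ^ m - L) with ((f O y - L * (y - x0) ^ m) / (y - x0) ^ m)
      by (field; apply pow_nonzero; lra).
    rewrite Rabs_div, <- RPow_abs by (apply pow_nonzero; lra).
    apply (Rmult_lt_reg_r (Rabs (y - x0) ^ m)); auto.
    unfold Rdiv. rewrite Rmult_assoc, Rinv_l by lra. nra.
Qed.

(* Transfers a multiplicity in the variable k to the variable l = k^2 at l0 > 0,
   using l - l0 = (k - sqrt l0)(k + sqrt l0). *)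
Lemma zero_mult_square (f Q : R -> R) l0 m : continuity f -> 0 < l0 ->
  zero_mult Q (sqrt l0) m -> (forall k, 0 < k -> f (k * k) = Q k / k ^ 4) ->
  zero_mult f l0 m.
Proof.
  intros Hf Hl [GQ [HG [HQ HG0]]] Hfk.
  set (k0 := sqrt l0) in *.
  assert (Hk0 : 0 < k0) by (apply sqrt_lt_R0; auto).
  assert (Hl0 : l0 = k0 * k0) by (unfold k0; rewrite sqrt_sqrt; lra).
  set (h := fun l => GQ (sqrt l) / ((sqrt l + k0) ^ m * sqrt l ^ 4)).
  assert (Hh0 : h l0 = GQ k0 / ((2 * k0) ^ m * k0 ^ 4)) by (unfold h; fold k0; do 3 f_equal; ring).
  assert (Hh : continuity_pt h l0).
  { apply continuity_pt_div.
    - apply (continuity_pt_comp sqrt GQ); [apply continuity_sqrt | apply HG].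
    - apply continuity_pt_mult; apply continuity_pt_pow;
        [apply continuity_pt_plus; [apply continuity_sqrt | apply continuity_cst]
        | apply continuity_sqrt].
    - fold k0. apply Rmult_integral_contrapositive. split; apply pow_nonzero; lra. }
  apply (zero_mult_of_limit f l0 m (h l0)); auto.
  - rewrite Hh0. apply Rmult_integral_contrapositive. split; auto.
    apply Rinv_neq_0_compat, Rmult_integral_contrapositive. split; apply pow_nonzero; lra.
  - rewrite Hh0, Hl0 at 1. rewrite Hfk, HQ, Rminus_diag by auto.
    destruct m; simpl; [field; lra | unfold Rdiv; ring].
  - intros e He. destruct (continuity_pt_eps h l0 Hh e He) as [d [Hd H]].
    exists (Rmin d l0). split; [apply Rmin_pos; auto|]. intros y ny Hy.
    pose proof (Rmin_l d l0). pose proof (Rmin_r d l0). apply Rabs_def2 in Hy as Hy'.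
    assert (Hk : 0 < sqrt y) by (apply sqrt_lt_R0; lra).
    assert (Hs : y = sqrt y * sqrt y) by (rewrite sqrt_sqrt; lra).
    assert (Hkk : sqrt y <> k0) by (intro E; apply ny; rewrite Hs, Hl0, E; auto).
    replace (f y / (y - l0) ^ m) with (h y); [apply H; lra|].
    unfold h. set (s := sqrt y) in *.
    rewrite Hs at 1. rewrite Hfk, HQ by auto. rewrite Hs, Hl0.
    replace (s * s - k0 * k0) with ((s - k0) * (s + k0)) by ring.
    rewrite Rpow_mult_distr. field. repeat split; try apply pow_nonzero; lra.
Qed.

Lemma nat_interval_eq a m b n : (1 <= n)%nat ->
  (forall j, (a <= j < a + m)%nat <-> (b <= j < b + n)%nat) -> a = b /\ m = n.
Proof.
  intros Hn H.
  assert (Hb := proj2 (H b) ltac:(lia)).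
  assert (Ha := proj1 (H a) ltac:(lia)).
  assert (a = b) by lia. subst b. split; auto.
  destruct (Nat.lt_trichotomy m n) as [L|[L|L]]; auto.
  - specialize (H (a + m)%nat). lia.
  - specialize (H (a + n)%nat). lia.
Qed.

Section ZeroEnumeration.

Variables (f : R -> R) (B : R).
Hypothesis f_cont : continuity f.
Hypothesis f_mult : forall x, f x = 0 -> exists m, zero_mult f x m.
Hypothesis f_unbounded : forall X, exists y, X < y /\ f y = 0.
Hypothesis f_nonzero_below : forall y, y <= B -> f y <> 0.

Lemma zeros_isolated x : exists d, 0 < d /\ forall y, 0 < Rabs (y - x) < d -> f y <> 0.
Proof.
  destruct (Req_dec (f x) 0) as [E|E].
  - destruct (f_mult x E) as [m H]. eapply zero_mult_isolated; eauto.
  - destruct (continuity_pt_nonzero_near f x (f_cont x) E) as [d [Hd H]].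
    exists d. split; auto. intros y [_ Hy]. auto.
Qed.

Definition next_zero (x : R) : R :=
  epsilon (inhabits 0) (fun s => x < s /\ f s = 0 /\ forall y, x < y -> f y = 0 -> s <= y).

Lemma next_zero_spec x :
  x < next_zero x /\ f (next_zero x) = 0 /\ forall y, x < y -> f y = 0 -> next_zero x <= y.
Proof.
  unfold next_zero. apply epsilon_spec.
  destruct (f_unbounded x) as [y0 [Hy0 Hy0']].
  set (E := fun y => x < - y /\ f (- y) = 0).
  assert (Hb : bound E) by (exists (- x); intros y [H _]; lra).
  assert (Hn : exists y, E y) by (exists (- y0); unfold E; rewrite Ropp_involutive; auto).
  destruct (completeness E Hb Hn) as [m [Hub Hlub]].
  (* s = - sup E is the infimum of the zeros above x; isolation makes it a zero *)
  set (s := - m).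
  assert (Hlow : forall y, x < y -> f y = 0 -> s <= y).
  { intros y H1 H2. assert (E (- y)) by (unfold E; rewrite Ropp_involutive; auto).
    specialize (Hub _ H). unfold s. lra. }
  assert (Happ : forall d, 0 < d -> exists y, x < y /\ f y = 0 /\ y < s + d).
  { intros d Hd. apply NNPP. intro C.
    assert (m <= m - d); [|lra].
    apply Hlub. intros y [H1 H2]. apply Rnot_lt_le. intro H3. apply C.
    exists (- y). unfold s. repeat split; auto; lra. }
  destruct (zeros_isolated s) as [d [Hd Hs]].
  destruct (Happ d Hd) as [y [H1 [H2 H3]]].
  assert (y = s) as <-; [|exists y; auto].
  apply NNPP. intro Hne. apply (Hs y); auto. pose proof (Hlow y H1 H2).
  rewrite Rabs_right by lra. split; lra.
Qed.

Fixpoint zero_seq (i : nat) : R :=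
  match i with O => next_zero B | S i => next_zero (zero_seq i) end.

Lemma zero_seq_root i : f (zero_seq i) = 0.
Proof. destruct i; apply next_zero_spec. Qed.

Lemma zero_seq_first y : B < y -> f y = 0 -> zero_seq 0 <= y.
Proof. apply next_zero_spec. Qed.

Lemma zero_seq_next i y : zero_seq i < y -> f y = 0 -> zero_seq (S i) <= y.
Proof. apply next_zero_spec. Qed.

Lemma zero_seq_lt i j : (i < j)%nat -> zero_seq i < zero_seq j.
Proof.
  induction 1; [|eapply Rlt_trans; eauto]; apply next_zero_spec.
Qed.

Lemma zero_seq_le i j : (i <= j)%nat -> zero_seq i <= zero_seq j.
Proof.
  intro H. destruct (Nat.eq_dec i j) as [->|]; [lra|]. left. apply zero_seq_lt. lia.
Qed.

Lemma zero_seq_inj i j : zero_seq i = zero_seq j -> i = j.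
Proof.
  intro E. destruct (Nat.lt_trichotomy i j) as [L|[L|L]]; auto;
    pose proof (zero_seq_lt _ _ L); lra.
Qed.

Lemma zero_seq_pos i : B < zero_seq i.
Proof.
  apply Rnot_le_lt. intro C. apply (f_nonzero_below _ C), zero_seq_root.
Qed.

Lemma zero_seq_unbounded X : exists i, X < zero_seq i.
Proof.
  apply NNPP. intro C.
  assert (Hle : forall i, zero_seq i <= X) by (intro i; apply Rnot_lt_le; eauto).
  set (E := fun y => exists i, y = zero_seq i).
  assert (Hb : bound E) by (exists X; intros y [i ->]; auto).
  destruct (completeness E Hb (ex_intro _ _ (ex_intro _ 0%nat eq_refl))) as [L [Hub Hlub]].
  (* the increasing sequence accumulates at its supremum L, contradicting isolation *)
  destruct (zeros_isolated L) as [d [Hd HL]].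
  assert (exists i, L - d < zero_seq i) as [i Hi].
  { apply NNPP. intro C2. assert (L <= L - d); [|lra].
    apply Hlub. intros y [i ->]. apply Rnot_lt_le. eauto. }
  assert (H1 : zero_seq (S i) <= L) by (apply Hub; eexists; eauto).
  assert (H2 : zero_seq (S (S i)) <= L) by (apply Hub; eexists; eauto).
  pose proof (zero_seq_lt i (S i) ltac:(lia)).
  pose proof (zero_seq_lt (S i) (S (S i)) ltac:(lia)).
  apply (HL (zero_seq (S i))); [|apply zero_seq_root].
  rewrite Rabs_left by lra. split; lra.
Qed.

Lemma zero_seq_onto x : f x = 0 -> exists i, x = zero_seq i.
Proof.
  intro Hx. destruct (zero_seq_unbounded x) as [i Hxi]. induction i as [|i IH].
  - exfalso. assert (B < x) by (apply Rnot_le_lt; intro; eapply f_nonzero_below; eauto).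
    pose proof (zero_seq_first x H Hx). lra.
  - destruct (Rtotal_order (zero_seq i) x) as [L|[L|L]]; eauto.
    pose proof (zero_seq_next i x L Hx). lra.
Qed.

(* Pigeonhole: the indices of the roots in l would be |l| distinct numbers in [p, i). *)
Lemma zero_seq_lt_of_roots lo hi p (l : list R) :
  (forall i, (i < p)%nat -> zero_seq i < lo) ->
  (forall x, In x l -> lo < x < hi /\ f x = 0) -> NoDup l ->
  forall i, (p <= i < p + length l)%nat -> zero_seq i < hi.
Proof.
  intros Hlo Hl Hnd i Hi. apply Rnot_le_lt. intro Hhi.
  set (idx := fun x => epsilon (inhabits O) (fun j => x = zero_seq j)).
  assert (Hidx : forall x, In x l -> x = zero_seq (idx x)).
  { intros x Hx. apply epsilon_spec, zero_seq_onto, Hl, Hx. }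
  assert (Hincl : incl (map idx l) (seq p (i - p))).
  { intros j Hj. apply in_map_iff in Hj. destruct Hj as [x [<- Hx]].
    apply in_seq. pose proof (Hidx x Hx) as E. destruct (Hl x Hx) as [[Hx1 Hx2] _].
    split.
    - apply Nat.nlt_ge. intro C. specialize (Hlo _ C). lra.
    - apply Nat.nle_gt. intro C. pose proof (zero_seq_le i (idx x) ltac:(lia)). lra. }
  apply NoDup_incl_length in Hincl.
  - rewrite length_map, length_seq in Hincl. lia.
  - apply NoDup_map_NoDup_ForallPairs; auto.
    intros x y Hx Hy E. rewrite (Hidx x Hx), (Hidx y Hy), E. reflexivity.
Qed.

Definition zero_order (i : nat) : nat :=
  epsilon (inhabits O) (fun m => zero_mult f (zero_seq i) m).

Lemma zero_order_spec i : zero_mult f (zero_seq i) (zero_order i).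
Proof. unfold zero_order. apply epsilon_spec, f_mult, zero_seq_root. Qed.

Lemma zero_order_pos i : (1 <= zero_order i)%nat.
Proof. eapply zero_mult_root_pos; [apply zero_order_spec | apply zero_seq_root]. Qed.

(* [zero_offset i] is the position of the first copy of [zero_seq i] in the
   enumeration with multiplicities. *)
Fixpoint zero_offset (i : nat) : nat :=
  match i with O => O | S i => (zero_offset i + zero_order i)%nat end.

Lemma zero_offset_lt i j : (i < j)%nat -> (zero_offset i < zero_offset j)%nat.
Proof.
  induction 1; simpl; pose proof (zero_order_pos i); try pose proof (zero_order_pos m); lia.
Qed.

Lemma zero_offset_le i j : (i <= j)%nat -> (zero_offset i <= zero_offset j)%nat.
Proof.
  intro H. destruct (Nat.eq_dec i j) as [->|]; [lia|].
  apply Nat.lt_le_incl, zero_offset_lt. lia.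
Qed.

Fixpoint zero_block (j : nat) : nat :=
  match j with
  | O => O
  | S j => if Nat.leb (zero_offset (S (zero_block j))) (S j) then S (zero_block j)
           else zero_block j
  end.

Lemma zero_block_spec j :
  (zero_offset (zero_block j) <= j < zero_offset (S (zero_block j)))%nat.
Proof.
  induction j as [|j IH]; simpl.
  - pose proof (zero_order_pos 0). lia.
  - destruct (Nat.leb _ _) eqn:E; simpl in *.
    + apply Nat.leb_le in E. pose proof (zero_order_pos (S (zero_block j))). lia.
    + apply Nat.leb_gt in E. lia.
Qed.

Lemma zero_block_unique j i :
  (zero_offset i <= j < zero_offset (S i))%nat -> zero_block j = i.
Proof.
  intro H. pose proof (zero_block_spec j).
  destruct (Nat.lt_trichotomy (zero_block j) i) as [L|[L|L]]; auto.
  - pose proof (zero_offset_le (S (zero_block j)) i L). lia.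
  - pose proof (zero_offset_le (S i) (zero_block j) L). lia.
Qed.

Definition zero_enum (j : nat) : R := zero_seq (zero_block j).

Lemma zero_enum_block j i :
  zero_enum j = zero_seq i <-> (zero_offset i <= j < zero_offset i + zero_order i)%nat.
Proof.
  unfold zero_enum. split.
  - intro E. apply zero_seq_inj in E. rewrite <- E. apply zero_block_spec.
  - intro H. rewrite (zero_block_unique j i); auto.
Qed.

Lemma zero_enum_le i j : (i <= j)%nat -> zero_enum i <= zero_enum j.
Proof.
  intro Hij. apply zero_seq_le.
  pose proof (zero_block_spec i). pose proof (zero_block_spec j).
  destruct (Compare_dec.le_lt_dec (zero_block i) (zero_block j)) as [|L]; auto.
  pose proof (zero_offset_le (S (zero_block j)) (zero_block i) L). lia.
Qed.

Lemma zero_enum_spec : enum_zeros f zero_enum.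
Proof.
  split; [exact zero_enum_le|]. intros x m.
  destruct (Req_dec (f x) 0) as [Z|Z].
  - destruct (zero_seq_onto x Z) as [i ->]. split.
    + intro H. rewrite <- (zero_mult_unique _ _ _ _ (zero_order_spec i) H).
      exists (zero_offset i). intro j. apply zero_enum_block.
    + intros [j0 H].
      assert (E : j0 = zero_offset i /\ m = zero_order i).
      { apply nat_interval_eq; [apply zero_order_pos|].
        intro j. rewrite <- H. apply zero_enum_block. }
      destruct E as [_ ->]. apply zero_order_spec.
  - assert (Hn : forall j, zero_enum j <> x).
    { intros j E. apply Z. rewrite <- E. apply zero_seq_root. }
    split.
    + intro H. destruct m.
      * exists O. intro j. split; [intro E; exfalso; eapply Hn; eauto | lia].
      * exfalso. apply Z. eapply zero_mult_root; eauto. lia.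
    + intros [j0 H]. destruct m.
      * apply zero_mult_nonroot; auto.
      * exfalso. apply (Hn j0), H. lia.
Qed.

Lemma zero_enum_simple_prefix N : (forall i, (i < N)%nat -> zero_order i = 1%nat) ->
  forall j, (j < N)%nat -> zero_enum j = zero_seq j.
Proof.
  intros H1 j Hj.
  assert (Hoff : forall i, (i <= N)%nat -> zero_offset i = i).
  { induction i as [|i IH]; intro Hi; simpl; auto. rewrite IH, H1 by lia. lia. }
  apply zero_enum_block. rewrite Hoff, H1 by lia. lia.
Qed.

End ZeroEnumeration.

Definition sinc (v : R) : R := if Req_EM_T v 0 then 1 else sin v / v.
Definition sinhc (v : R) : R := if Req_EM_T v 0 then 1 else sinh v / v.

Lemma continuity_div_id (s : R -> R) : continuity s -> s 0 = 0 -> derivable_pt_lim s 0 1 ->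
  continuity (fun v => if Req_EM_T v 0 then 1 else s v / v).
Proof.
  intros Hs S0 Hd x. destruct (Req_dec x 0) as [->|Hx].
  - apply continuity_pt_of_eps. intros e He. destruct (Hd e He) as [d Hdd].
    exists d. split; [apply cond_pos|]. intros y Hy.
    destruct (Req_EM_T 0 0) as [_|]; [|congruence].
    destruct (Req_EM_T y 0) as [->|ny].
    + rewrite Rminus_diag, Rabs_R0. auto.
    + rewrite Rminus_0_r in Hy. specialize (Hdd y ny Hy).
      rewrite Rplus_0_l, S0, Rminus_0_r in Hdd. auto.
  - apply (continuity_pt_locally_ext (fun v => s v / v) _ (Rabs x) x).
    + apply Rabs_pos_lt; auto.
    + intros y Hy. unfold Rdist in Hy. destruct (Req_EM_T y 0) as [->|]; auto.
      rewrite Rminus_0_l, Rabs_Ropp in Hy. lra.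
    + apply continuity_pt_div; auto. apply derivable_continuous_pt, derivable_pt_id.
Qed.

Lemma sinh_0 : sinh 0 = 0.
Proof. unfold sinh. rewrite Ropp_0. field. Qed.

Lemma continuity_sinh : continuity sinh.
Proof. intro x. apply derivable_continuous_pt. exists (cosh x). apply derivable_pt_lim_sinh. Qed.

Lemma continuity_cosh : continuity cosh.
Proof. intro x. apply derivable_continuous_pt. exists (sinh x). apply derivable_pt_lim_cosh. Qed.

Lemma continuity_sinc : continuity sinc.
Proof.
  apply continuity_div_id; [apply continuity_sin | apply sin_0 | apply derivable_pt_lim_sin_0].
Qed.

Lemma continuity_sinhc : continuity sinhc.
Proof.
  apply continuity_div_id; [apply continuity_sinh | apply sinh_0|].
  pose proof (derivable_pt_lim_sinh 0) as H. rewrite cosh_0 in H. exact H.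
Qed.

Lemma continuity_sqrt_scaled (g : R -> R) (sigma x : R) : continuity g ->
  continuity (fun l => g (sqrt (sigma * l) * x)).
Proof.
  intros Hg l. apply (continuity_pt_comp (fun l => sqrt (sigma * l) * x) g); [|apply Hg].
  apply continuity_pt_mult; [|apply continuity_cst].
  apply (continuity_pt_comp (fun l => sigma * l) sqrt); [|apply continuity_sqrt].
  apply continuity_pt_scal, derivable_continuous_pt, derivable_pt_id.
Qed.

Lemma continuity_cf x : continuity (fun l => cf l x).
Proof.
  apply (continuity_glue _ (fun l => cos (sqrt (1 * l) * x))
           (fun l => cosh (sqrt (-1 * l) * x)) 0).
  - intros y Hy. unfold cf. destruct (Rle_dec 0 y); [|lra]. now rewrite Rmult_1_l.
  - intros y Hy. unfold cf. destruct (Rle_dec 0 y).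
    + replace y with 0 by lra. rewrite Rmult_0_r, sqrt_0, !Rmult_0_l, cos_0, cosh_0. auto.
    + do 3 f_equal. ring.
  - apply continuity_sqrt_scaled, continuity_cos.
  - apply continuity_sqrt_scaled, continuity_cosh.
Qed.

Lemma continuity_sf x : continuity (fun l => sf l x).
Proof.
  apply (continuity_glue _ (fun l => x * sinc (sqrt (1 * l) * x))
           (fun l => x * sinhc (sqrt (-1 * l) * x)) 0).
  - intros y Hy. rewrite Rmult_1_l. unfold sf, sinc. destruct (Rlt_dec 0 y).
    + assert (sqrt y > 0) by (apply sqrt_lt_R0; auto).
      destruct (Req_EM_T (sqrt y * x) 0) as [E|E].
      * assert (x = 0) as -> by (destruct (Rmult_integral _ _ E); auto; lra).
        rewrite Rmult_0_r, sin_0. field. lra.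
      * assert (x <> 0) by (intros ->; apply E; ring). field. split; auto; lra.
    + replace y with 0 by lra. destruct (Rlt_dec 0 0); [lra|].
      rewrite sqrt_0, Rmult_0_l. destruct (Req_EM_T 0 0); [ring|congruence].
  - intros y Hy. replace (-1 * y) with (- y) by ring. unfold sf, sinhc.
    destruct (Rlt_dec 0 y); [lra|]. destruct (Rlt_dec y 0).
    + assert (sqrt (- y) > 0) by (apply sqrt_lt_R0; lra).
      destruct (Req_EM_T (sqrt (- y) * x) 0) as [E|E].
      * assert (x = 0) as -> by (destruct (Rmult_integral _ _ E); auto; lra).
        rewrite Rmult_0_r, sinh_0. field. lra.
      * assert (x <> 0) by (intros ->; apply E; ring). field. split; auto; lra.
    + replace y with 0 by lra. rewrite Ropp_0, sqrt_0, Rmult_0_l.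
      destruct (Req_EM_T 0 0); [ring|congruence].
  - intro l. apply continuity_pt_mult; [apply continuity_cst|].
    apply continuity_sqrt_scaled, continuity_sinc.
  - intro l. apply continuity_pt_mult; [apply continuity_cst|].
    apply continuity_sqrt_scaled, continuity_sinhc.
Qed.

Ltac continuity_F :=
  unfold Fh, Fm, phi1', theta1;
  repeat first [apply continuity_plus | apply continuity_minus | apply continuity_mult
    | apply continuity_div | apply continuity_opp | apply continuity_cf | apply continuity_sf
    | apply continuity_cst]; intros; lra.

Lemma continuity_Fh e : continuity (Fh e).
Proof. continuity_F. Qed.

Lemma continuity_Fm e : continuity (Fm e).
Proof. continuity_F. Qed.

Lemma cf_sq k x : 0 < k -> cf (k * k) x = cos (k * x).
Proof.
  intro H. unfold cf. destruct (Rle_dec 0 (k * k)); [|nra]. rewrite sqrt_square; lra.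
Qed.

Lemma sf_sq k x : 0 < k -> sf (k * k) x = sin (k * x) / k.
Proof.
  intro H. unfold sf. destruct (Rlt_dec 0 (k * k)); [|nra]. rewrite sqrt_square; lra.
Qed.

Lemma cf_neg_sq k x : 0 < k -> cf (- (k * k)) x = cosh (k * x).
Proof.
  intro H. unfold cf. destruct (Rle_dec 0 (- (k * k))); [nra|].
  rewrite Ropp_involutive, sqrt_square; lra.
Qed.

Lemma sf_neg_sq k x : 0 < k -> sf (- (k * k)) x = sinh (k * x) / k.
Proof.
  intro H. unfold sf. destruct (Rlt_dec 0 (- (k * k))); [nra|].
  destruct (Rlt_dec (- (k * k)) 0); [|nra]. rewrite Ropp_involutive, sqrt_square; lra.
Qed.

Lemma cf_0 x : cf 0 x = 1.
Proof. unfold cf. destruct (Rle_dec 0 0); [|lra]. rewrite sqrt_0, Rmult_0_l, cos_0; auto. Qed.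

Lemma sf_0 x : sf 0 x = x.
Proof. unfold sf. destruct (Rlt_dec 0 0); [lra|]. destruct (Rlt_dec 0 0); [lra|auto]. Qed.

Lemma sinh_plus a b : sinh (a + b) = sinh a * cosh b + cosh a * sinh b.
Proof. unfold sinh, cosh. rewrite Ropp_plus_distr, !exp_plus. field. Qed.

Lemma sinh_minus a b : sinh (a - b) = sinh a * cosh b - cosh a * sinh b.
Proof.
  unfold sinh, cosh, Rminus. rewrite Ropp_plus_distr, Ropp_involutive, !exp_plus. field.
Qed.

Lemma Fh_sq e k : 0 < e -> 0 < k -> Fh e (k * k) = cos k + sin k / (2 * e * k).
Proof.
  intros He Hk. unfold Fh, phi1', theta1. rewrite !cf_sq, !sf_sq by auto.
  replace (sin k) with (sin (k * t0 e + k * (1 - t0 e))) by (f_equal; ring).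
  rewrite sin_plus, Rmult_1_r. field. lra.
Qed.

Lemma Fm_sq e k : 0 < e -> 0 < k -> Fm e (k * k) = sin (4 * e * k) / (2 * e * k).
Proof.
  intros He Hk. unfold Fm, phi1', theta1. rewrite !cf_sq, !sf_sq by auto.
  replace (4 * e * k) with (k * t0 e - k * (1 - t0 e)) by (unfold t0; field).
  rewrite sin_minus. field. lra.
Qed.

Lemma Fh_neg_sq e k : 0 < e -> 0 < k -> Fh e (- (k * k)) = cosh k + sinh k / (2 * e * k).
Proof.
  intros He Hk. unfold Fh, phi1', theta1. rewrite !cf_neg_sq, !sf_neg_sq by auto.
  replace (sinh k) with (sinh (k * t0 e + k * (1 - t0 e))) by (f_equal; ring).
  rewrite sinh_plus, Rmult_1_r. field. lra.
Qed.

Lemma Fm_neg_sq e k : 0 < e -> 0 < k -> Fm e (- (k * k)) = sinh (4 * e * k) / (2 * e * k).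
Proof.
  intros He Hk. unfold Fm, phi1', theta1. rewrite !cf_neg_sq, !sf_neg_sq by auto.
  replace (4 * e * k) with (k * t0 e - k * (1 - t0 e)) by (unfold t0; field).
  rewrite sinh_minus. field. lra.
Qed.

Lemma Fh_0 e : 0 < e -> Fh e 0 = 1 + 1 / (2 * e).
Proof. intros. unfold Fh, phi1', theta1. rewrite !cf_0, !sf_0. field. lra. Qed.

Lemma Fm_0 e : 0 < e -> Fm e 0 = 2.
Proof. intros. unfold Fm, phi1', theta1. rewrite !cf_0, !sf_0. unfold t0. field. lra. Qed.

Definition is_sign (s : R) : Prop := s = 1 \/ s = -1.

Lemma is_sign_1 : is_sign 1.
Proof. left; reflexivity. Qed.

Lemma is_sign_m1 : is_sign (-1).
Proof. right; reflexivity. Qed.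

#[local] Hint Resolve is_sign_1 is_sign_m1 : core.

Definition Dfactor (s1 s2 e l : R) : R := 3 * Fh e l - s1 - s2 * Fm e l.

(* At a = 0 and k = 0 one has c_0 = 1 and s_0 = 0, so xi and rho are explicit
   and D_0^- splits into the four factors 3F - s1 - s2 F_-. *)
Lemma Dm_minus_factor N e l : Dm_minus N 0 0 e l =
  Dfactor 1 1 e l * Dfactor 1 (-1) e l * Dfactor (-1) 1 e l * Dfactor (-1) (-1) e l.
Proof.
  unfold Dm_minus, xi, rho, ck, sk, Dfactor. simpl INR.
  replace (PI * 0 / INR N + 0) with 0 by (unfold Rdiv; ring).
  rewrite cos_0, sin_0. field.
Qed.

Lemma continuity_Dm_minus N e : continuity (Dm_minus N 0 0 e).
Proof.
  assert (HD : forall s1 s2, continuity (Dfactor s1 s2 e)).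
  { intros s1 s2. unfold Dfactor.
    repeat first [apply continuity_Fh | apply continuity_Fm | apply continuity_minus
      | apply continuity_mult | apply continuity_cst]. }
  intro l. apply (continuity_pt_ext (fun l => Dfactor 1 1 e l * Dfactor 1 (-1) e l
    * Dfactor (-1) 1 e l * Dfactor (-1) (-1) e l)).
  - intro. symmetry. apply Dm_minus_factor.
  - repeat apply continuity_pt_mult; apply HD.
Qed.

Lemma sinh_pos a : 0 < a -> 0 < sinh a.
Proof. intro H. rewrite <- sinh_0. apply sinh_lt, H. Qed.

Lemma cosh_ge_1 a : 1 <= cosh a.
Proof. unfold cosh. pose proof (exp_ineq1_le a). pose proof (exp_ineq1_le (- a)). lra. Qed.

Lemma Dfactor_pos_nonpos s1 s2 e l : 0 < e < 1/4 -> l <= 0 -> is_sign s1 -> is_sign s2 ->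
  0 < Dfactor s1 s2 e l.
Proof.
  intros He Hl H1 H2. unfold Dfactor. destruct (Req_dec l 0) as [->|Hn].
  - rewrite Fh_0, Fm_0 by lra.
    assert (1 / (2 * e) > 2) by (apply (Rmult_lt_reg_r (2 * e)); [lra | field_simplify; lra]).
    destruct H1 as [->| ->]; destruct H2 as [->| ->]; lra.
  - set (k := sqrt (- l)). assert (Hk : 0 < k) by (apply sqrt_lt_R0; lra).
    replace l with (- (k * k)) by (unfold k; rewrite sqrt_sqrt; lra).
    rewrite Fh_neg_sq, Fm_neg_sq by lra.
    assert (A1 : 0 < sinh (4 * e * k)) by (apply sinh_pos; nra).
    assert (A2 : sinh (4 * e * k) <= sinh k) by (left; apply sinh_lt; nra).
    assert (A3 := cosh_ge_1 k).
    assert (A4 : 0 < 2 * e * k) by nra.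
    assert (A5 : sinh (4 * e * k) / (2 * e * k) <= sinh k / (2 * e * k))
      by (apply Rmult_le_compat_r; [left; apply Rinv_0_lt_compat|]; auto).
    assert (A6 : 0 < sinh (4 * e * k) / (2 * e * k)) by (apply Rdiv_lt_0_compat; auto).
    destruct H1 as [->| ->]; destruct H2 as [->| ->]; lra.
Qed.

Lemma Dm_minus_nonzero_nonpos N e l : 0 < e < 1/4 -> l <= 0 -> Dm_minus N 0 0 e l <> 0.
Proof.
  intros He Hl. rewrite Dm_minus_factor. apply Rgt_not_eq.
  repeat apply Rmult_lt_0_compat; apply Dfactor_pos_nonpos; auto.
Qed.

Definition Q (s1 s2 e k : R) : R :=
  3 * k * cos k + 3 / (2 * e) * sin k - s1 * k - s2 / (2 * e) * sin (4 * e * k).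

Lemma Dfactor_sq s1 s2 e k : 0 < e -> 0 < k -> Dfactor s1 s2 e (k * k) = Q s1 s2 e k / k.
Proof. intros He Hk. unfold Dfactor, Q. rewrite Fh_sq, Fm_sq by auto. field. lra. Qed.

Definition Q4 (e k : R) : R := Q 1 1 e k * Q 1 (-1) e k * Q (-1) 1 e k * Q (-1) (-1) e k.

Lemma Dm_minus_sq N e k : 0 < e -> 0 < k -> Dm_minus N 0 0 e (k * k) = Q4 e k / k ^ 4.
Proof. intros He Hk. rewrite Dm_minus_factor, !Dfactor_sq by auto. unfold Q4. field. lra. Qed.

Lemma Dm_minus_sq_root N e k s1 s2 : 0 < e -> 0 < k -> is_sign s1 -> is_sign s2 ->
  Q s1 s2 e k = 0 -> Dm_minus N 0 0 e (k * k) = 0.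
Proof.
  intros He Hk H1 H2 H. rewrite Dm_minus_sq by auto. unfold Q4.
  destruct H1 as [->| ->]; destruct H2 as [->| ->]; rewrite H; unfold Rdiv; ring.
Qed.

Lemma Dm_minus_zero_mult N e l m1 m2 m3 m4 : 0 < e -> 0 < l ->
  zero_mult (Q 1 1 e) (sqrt l) m1 -> zero_mult (Q 1 (-1) e) (sqrt l) m2 ->
  zero_mult (Q (-1) 1 e) (sqrt l) m3 -> zero_mult (Q (-1) (-1) e) (sqrt l) m4 ->
  zero_mult (Dm_minus N 0 0 e) l (m1 + m2 + m3 + m4).
Proof.
  intros He Hl H1 H2 H3 H4. apply (zero_mult_square _ (Q4 e)); auto.
  - apply continuity_Dm_minus.
  - unfold Q4. repeat apply zero_mult_mul; auto.
  - intros k Hk. apply Dm_minus_sq; auto.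
Qed.

Fixpoint sin_der (j : nat) (x : R) : R :=
  match j with O => sin x | 1%nat => cos x | S (S j) => - sin_der j x end.

Lemma is_derive_sin_der j x : is_derive (sin_der j) x (sin_der (S j) x).
Proof.
  revert x. induction j as [j IH] using (well_founded_induction Wf_nat.lt_wf). intro x.
  destruct j as [|[|j]].
  - apply is_derive_sin.
  - apply is_derive_cos.
  - apply (is_derive_opp (sin_der j)), IH. lia.
Qed.

Lemma is_derive_sin_der_scaled c j x :
  is_derive (fun x => sin_der j (c * x)) x (c * sin_der (S j) (c * x)).
Proof.
  apply (is_derive_comp (sin_der j) (fun x => c * x)); [apply is_derive_sin_der|].
  pose proof (is_derive_scal (fun x => x) x c 1 (is_derive_id x)) as H.
  rewrite Rmult_1_r in H. exact H.
Qed.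

Definition xcos_der (j : nat) (x : R) : R := x * sin_der (S j) x + INR j * sin_der j x.

Lemma is_derive_xcos_der j x : is_derive (xcos_der j) x (xcos_der (S j) x).
Proof.
  unfold xcos_der.
  replace (x * sin_der (S (S j)) x + INR (S j) * sin_der (S j) x)
    with ((1 * sin_der (S j) x + x * sin_der (S (S j)) x) + INR j * sin_der (S j) x)
    by (rewrite S_INR; ring).
  apply (is_derive_plus (fun x => x * sin_der (S j) x) (fun x => INR j * sin_der j x)).
  - apply (Derive.is_derive_mult (fun x => x)); [apply (is_derive_id (K := R_AbsRing)) | apply is_derive_sin_der].
  - apply is_derive_scal, is_derive_sin_der.
Qed.

Definition id_der (j : nat) (x : R) : R := match j with O => x | 1%nat => 1 | _ => 0 end.

Lemma is_derive_id_der j x : is_derive (id_der j) x (id_der (S j) x).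
Proof.
  destruct j as [|[|j]]; cbv [id_der];
    [apply (is_derive_id (K := R_AbsRing))
    | apply (is_derive_const (K := R_AbsRing) (V := R_NormedModule)) ..].
Qed.

Definition Qder (s1 s2 e : R) (j : nat) (k : R) : R :=
  3 * xcos_der j k + 3 / (2 * e) * sin_der j k - s1 * id_der j k
  - s2 / (2 * e) * (4 * e) ^ j * sin_der j (4 * e * k).

Lemma Qder_0 s1 s2 e k : Qder s1 s2 e 0 k = Q s1 s2 e k.
Proof. unfold Qder, Q, xcos_der. simpl. ring. Qed.

Lemma Qder_1 s1 s2 e k : 0 < e -> Qder s1 s2 e 1 k =
  (3 + 3 / (2 * e)) * cos k - 3 * k * sin k - s1 - 2 * s2 * cos (4 * e * k).
Proof. intro. unfold Qder, xcos_der. simpl. field. lra. Qed.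

Lemma is_derive_Qder s1 s2 e j k : is_derive (Qder s1 s2 e j) k (Qder s1 s2 e (S j) k).
Proof.
  unfold Qder at 2.
  replace (s2 / (2 * e) * (4 * e) ^ S j * sin_der (S j) (4 * e * k))
    with (s2 / (2 * e) * (4 * e) ^ j * (4 * e * sin_der (S j) (4 * e * k))) by (simpl; ring).
  apply (is_derive_minus (fun k => 3 * xcos_der j k + 3 / (2 * e) * sin_der j k
    - s1 * id_der j k) (fun k => s2 / (2 * e) * (4 * e) ^ j * sin_der j (4 * e * k))).
  - apply (is_derive_minus (fun k => 3 * xcos_der j k + 3 / (2 * e) * sin_der j k)
      (fun k => s1 * id_der j k)).
    + apply (is_derive_plus (fun k => 3 * xcos_der j k) (fun k => 3 / (2 * e) * sin_der j k));
        apply is_derive_scal; [apply is_derive_xcos_der | apply is_derive_sin_der].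
    + apply is_derive_scal, is_derive_id_der.
  - apply (is_derive_scal (fun k => sin_der j (4 * e * k))), is_derive_sin_der_scaled.
Qed.

Lemma continuity_Q s1 s2 e : continuity (Q s1 s2 e).
Proof.
  intro k. apply (continuity_pt_ext (Qder s1 s2 e 0)); [intro; apply Qder_0|].
  apply (continuity_pt_of_is_derive _ _ _ (is_derive_Qder s1 s2 e 0 k)).
Qed.

(* (D^2 + 1)^2 kills k cos k and sin k, and D^2 kills the linear term, so
   D^2 (D^2 + 1)^2 Q only retains the sin (4 e k) term. *)
Lemma Qder_relation_sin s1 s2 e k :
  Qder s1 s2 e 6 k + 2 * Qder s1 s2 e 4 k + Qder s1 s2 e 2 k =
  s2 / (2 * e) * (4 * e) ^ 2 * (1 - (4 * e) ^ 2) ^ 2 * sin (4 * e * k).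
Proof. unfold Qder, xcos_der. simpl. ring. Qed.

Lemma Qder_relation_cos s1 s2 e k :
  Qder s1 s2 e 7 k + 2 * Qder s1 s2 e 5 k + Qder s1 s2 e 3 k =
  s2 / (2 * e) * (4 * e) ^ 3 * (1 - (4 * e) ^ 2) ^ 2 * cos (4 * e * k).
Proof. unfold Qder, xcos_der. simpl. ring. Qed.

Lemma Qder_not_all_zero s1 s2 e k : s2 <> 0 -> 0 < e < 1/4 ->
  exists n, Qder s1 s2 e n k <> 0.
Proof.
  intros Hs He. apply NNPP. intro C.
  assert (Z : forall n, Qder s1 s2 e n k = 0) by (intro n; apply NNPP; eauto).
  pose proof (Qder_relation_sin s1 s2 e k) as Hsin.
  pose proof (Qder_relation_cos s1 s2 e k) as Hcos.
  rewrite !Z in Hsin, Hcos.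
  assert (Hc : forall j, s2 / (2 * e) * (4 * e) ^ j * (1 - (4 * e) ^ 2) ^ 2 <> 0).
  { intro j.
    assert (1 - (4 * e) ^ 2 <> 0) by (simpl; nra).
    assert (/ (2 * e) <> 0) by (apply Rinv_neq_0_compat; lra).
    repeat apply prod_neq_R0; auto; apply pow_nonzero; lra. }
  apply (cos_sin_0 (4 * e * k)). split.
  - apply (Rmult_eq_reg_l (s2 / (2 * e) * (4 * e) ^ 3 * (1 - (4 * e) ^ 2) ^ 2));
      [rewrite Rmult_0_r; lra | apply Hc].
  - apply (Rmult_eq_reg_l (s2 / (2 * e) * (4 * e) ^ 2 * (1 - (4 * e) ^ 2) ^ 2));
      [rewrite Rmult_0_r; lra | apply Hc].
Qed.

Lemma exists_least_failure (p : nat -> Prop) n : ~ p n ->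
  exists m, (forall j, (j < m)%nat -> p j) /\ ~ p m.
Proof.
  induction n as [n IH] using (well_founded_induction Wf_nat.lt_wf). intro Hn.
  destruct (classic (forall j, (j < n)%nat -> p j)) as [H|H]; [exists n; auto|].
  apply not_all_ex_not in H. destruct H as [j Hj].
  apply imply_to_and in Hj. destruct Hj as [Hj1 Hj2]. apply (IH j); auto.
Qed.

Lemma Q_zero_mult s1 s2 e k m : (forall j, (j < m)%nat -> Qder s1 s2 e j k = 0) ->
  Qder s1 s2 e m k <> 0 -> zero_mult (Q s1 s2 e) k m.
Proof.
  intros H1 H2.
  destruct (zero_mult_of_derivatives (Qder s1 s2 e) k m) as [g [Hg [Hf Hx]]]; auto.
  { intros; apply is_derive_Qder. }
  exists g. repeat split; auto. intro y. rewrite <- Qder_0. auto.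
Qed.

Lemma Q_zero_mult_exists s1 s2 e k : s2 <> 0 -> 0 < e < 1/4 ->
  exists m, zero_mult (Q s1 s2 e) k m.
Proof.
  intros Hs He. destruct (Qder_not_all_zero s1 s2 e k Hs He) as [n Hn].
  destruct (exists_least_failure (fun j => Qder s1 s2 e j k = 0) n Hn) as [m [H1 H2]].
  exists m. apply Q_zero_mult; auto.
Qed.

Lemma Dm_minus_zero_mult_exists N e l : 0 < e < 1/4 -> Dm_minus N 0 0 e l = 0 ->
  exists m, zero_mult (Dm_minus N 0 0 e) l m.
Proof.
  intros He Hl. destruct (Rle_dec l 0) as [L|L].
  { exfalso. eapply Dm_minus_nonzero_nonpos; eauto. }
  destruct (Q_zero_mult_exists 1 1 e (sqrt l) ltac:(lra) He) as [m1 H1].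
  destruct (Q_zero_mult_exists 1 (-1) e (sqrt l) ltac:(lra) He) as [m2 H2].
  destruct (Q_zero_mult_exists (-1) 1 e (sqrt l) ltac:(lra) He) as [m3 H3].
  destruct (Q_zero_mult_exists (-1) (-1) e (sqrt l) ltac:(lra) He) as [m4 H4].
  exists (m1 + m2 + m3 + m4)%nat. apply Dm_minus_zero_mult; auto; lra.
Qed.

Lemma IVT_strict (f : R -> R) x y : continuity f -> x < y -> f x * f y < 0 ->
  exists z, x < z < y /\ f z = 0.
Proof.
  intros Hc Hxy Hs. destruct (IVT_gen f x y 0 Hc) as [z [Hz Hfz]].
  { unfold Rmin, Rmax. destruct (Rle_dec (f x) (f y)); split; nra. }
  rewrite Rmin_left, Rmax_right in Hz by lra. exists z. split; auto.
  destruct (Req_dec z x) as [->|]; [nra|]. destruct (Req_dec z y) as [->|]; [nra|]. lra.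
Qed.

Lemma sin_cos_multiple_PI n : sin (INR n * PI) = 0 /\ cos (INR n * PI) ^ 2 = 1.
Proof.
  assert (Hs : sin (INR n * PI) = 0).
  { apply sin_eq_0_1. exists (Z.of_nat n). rewrite INR_IZR_INZ. reflexivity. }
  split; auto. pose proof (sin2_cos2 (INR n * PI)) as H.
  rewrite Hs in H. unfold Rsqr in H. simpl. lra.
Qed.

(* At t = n pi the term 3 t cos t has modulus 3 t and dominates the others. *)
Lemma Q11_cos_pos_multiple_PI e n : 0 < e -> 1 / (2 * e) < INR n * PI ->
  0 < Q 1 1 e (INR n * PI) * cos (INR n * PI).
Proof.
  intros He Ht. destruct (sin_cos_multiple_PI n) as [Hs Hc].
  set (t := INR n * PI) in *. simpl in Hc. rewrite Rmult_1_r in Hc.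
  assert (HB : 0 < 1 / (2 * e)) by (apply Rdiv_lt_0_compat; lra).
  assert (Hsc : Rabs (sin (4 * e * t) * cos t) <= 1).
  { rewrite Rabs_mult.
    assert (Rabs (sin (4 * e * t)) <= 1) by (apply Rabs_le, SIN_bound).
    assert (Rabs (cos t) <= 1) by (apply Rabs_le, COS_bound).
    pose proof (Rabs_pos (sin (4 * e * t))). pose proof (Rabs_pos (cos t)). nra. }
  apply Rabs_le_between in Hsc.
  assert (1 / (2 * e) * (sin (4 * e * t) * cos t) <= 1 / (2 * e)) by nra.
  assert (t * cos t <= t) by (pose proof (COS_bound t); nra).
  unfold Q. rewrite Hs.
  replace ((3 * t * cos t + 3 / (2 * e) * 0 - 1 * t - 1 / (2 * e) * sin (4 * e * t)) * cos t)
    with (3 * t * (cos t * cos t) - t * cos t - 1 / (2 * e) * (sin (4 * e * t) * cos t))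
    by (unfold Rdiv; ring).
  rewrite Hc. lra.
Qed.

Lemma Dm_minus_roots_unbounded N e : 0 < e -> forall X, exists y, X < y /\ Dm_minus N 0 0 e y = 0.
Proof.
  intros He X. pose proof PI_RGT_0.
  destruct (INR_unbounded ((Rabs X + 1 + 1 / (2 * e)) / PI)) as [n Hn].
  set (t := INR n * PI).
  assert (Ht : Rabs X + 1 + 1 / (2 * e) < t).
  { unfold t. apply (Rmult_lt_compat_r PI) in Hn; auto. unfold Rdiv in Hn.
    rewrite Rmult_assoc, Rinv_l, Rmult_1_r in Hn by lra. lra. }
  assert (HB : 0 < 1 / (2 * e)) by (apply Rdiv_lt_0_compat; lra).
  pose proof (Rabs_pos X). pose proof (Rle_abs X).
  assert (Q1 := Q11_cos_pos_multiple_PI e n He ltac:(fold t; lra)).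
  assert (Q2 := Q11_cos_pos_multiple_PI e (S n) He ltac:(rewrite S_INR, Rmult_plus_distr_r, Rmult_1_l; fold t; lra)).
  replace (INR (S n) * PI) with (t + PI) in Q2 by (unfold t; rewrite S_INR; ring).
  fold t in Q1. rewrite neg_cos in Q2.
  assert (Hc : cos t * cos t = 1)
    by (pose proof (proj2 (sin_cos_multiple_PI n)) as Hc; fold t in Hc; simpl in Hc; lra).
  assert (Hneg : Q 1 1 e t * Q 1 1 e (t + PI) < 0).
  { assert (Hp : 0 < Q 1 1 e t * Q 1 1 e (t + PI) * - (cos t * cos t)).
    { replace (Q 1 1 e t * Q 1 1 e (t + PI) * - (cos t * cos t))
        with ((Q 1 1 e t * cos t) * (Q 1 1 e (t + PI) * - cos t)) by ring.
      apply Rmult_lt_0_compat; auto. }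
    rewrite Hc in Hp. lra. }
  destruct (IVT_strict (Q 1 1 e) t (t + PI) (continuity_Q 1 1 e) ltac:(lra) Hneg)
    as [z [Hz Hqz]].
  exists (z * z). split; [nra|]. apply (Dm_minus_sq_root N e z 1 1); auto; lra.
Qed.

Definition small_eps (K e : R) : Prop := 4 <= K /\ 0 < e /\ 16 * e * (K + 4) < 1.

Lemma small_eps_bounds K e : small_eps K e -> 0 < e < 1/4 /\ e * K < 1/16.
Proof. intros [H1 [H2 H3]]. split; nra. Qed.

Lemma sin_ge_cubic a : 0 <= a <= 1 -> a - a ^ 3 / 6 <= sin a.
Proof.
  intros H. pose proof PI2_1. destruct (SIN a) as [L _]; try lra.
  eapply Rle_trans; [|exact L]. unfold sin_lb, sin_approx, sin_term. simpl.
  assert (a ^ 7 <= a ^ 5).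
  { replace (a ^ 7) with (a ^ 5 * (a * a)) by ring.
    rewrite <- (Rmult_1_r (a ^ 5)) at 2. apply Rmult_le_compat_l; [apply pow_le; lra | nra]. }
  assert (0 <= a ^ 5) by (apply pow_le; lra).
  simpl in *. lra.
Qed.

Lemma Fm_gt_1 K e k : small_eps K e -> 0 < k <= K -> 1 < Fm e (k * k).
Proof.
  intros G Hk. destruct (small_eps_bounds K e G) as [He HeK]. rewrite Fm_sq by lra.
  set (x := 4 * e * k).
  assert (Hx : 0 < x <= 1/4) by (unfold x; nra).
  pose proof (sin_ge_cubic x ltac:(lra)).
  assert (x ^ 3 / 6 < x / 2) by (simpl; nra).
  replace (2 * e * k) with (x / 2) by (unfold x; field).
  apply (Rmult_lt_reg_r (x / 2)); [lra|]. field_simplify; lra.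
Qed.

Lemma Q_root_sign_unique K e k s1 s2 t1 t2 : small_eps K e -> 0 < k <= K ->
  is_sign s1 -> is_sign s2 -> is_sign t1 -> is_sign t2 ->
  Q s1 s2 e k = 0 -> Q t1 t2 e k = 0 -> s1 = t1 /\ s2 = t2.
Proof.
  intros G Hk H1 H2 H3 H4 Q1 Q2. destruct (small_eps_bounds K e G) as [He _].
  assert (HF := Fm_gt_1 K e k G Hk).
  assert (Hroot : forall s1 s2, Q s1 s2 e k = 0 -> 3 * Fh e (k * k) = s1 + s2 * Fm e (k * k)).
  { intros a b Hab. pose proof (Dfactor_sq a b e k ltac:(lra) ltac:(lra)) as HD.
    rewrite Hab in HD. unfold Dfactor in HD. unfold Rdiv in HD. lra. }
  apply Hroot in Q1. apply Hroot in Q2.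
  destruct H1 as [->| ->]; destruct H2 as [->| ->]; destruct H3 as [->| ->];
    destruct H4 as [->| ->]; split; lra.
Qed.

(* At a root, A sin k (A = 3/(2e)) equals terms of size O(k), so |sin k| <= 1/4 and
   |cos k| >= 3/4; then A cos k dominates the first derivative. *)
Lemma Qder_1_nonzero_at_root K e k s1 s2 : small_eps K e -> 0 < k <= K ->
  is_sign s1 -> is_sign s2 -> Q s1 s2 e k = 0 -> Qder s1 s2 e 1 k <> 0.
Proof.
  intros G Hk H1 H2 HQ. destruct (small_eps_bounds K e G) as [He HeK].
  destruct G as [GK [_ G3]].
  rewrite Qder_1 by lra. unfold Q in HQ.
  set (A := 3 / (2 * e)) in *.
  assert (HA : A * e = 3 / 2) by (unfold A; field; lra).
  assert (HA2 : 24 * (K + 4) < A) by nra.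
  assert (Hs : 0 <= sin (4 * e * k) <= 4 * e * k).
  { split; [apply sin_ge_0; pose proof PI2_1; nra | left; apply sin_lt_x; nra]. }
  assert (HB : 1 / (2 * e) * sin (4 * e * k) <= 2 * k).
  { apply (Rmult_le_reg_l (2 * e)); [lra|]. field_simplify; nra. }
  assert (HB0 : 0 <= 1 / (2 * e) * sin (4 * e * k)).
  { apply Rmult_le_pos; [left; apply Rdiv_lt_0_compat|]; lra. }
  pose proof (COS_bound k). pose proof (SIN_bound k).
  assert (Hsin : A * sin k <= 6 * k /\ - (6 * k) <= A * sin k).
  { destruct H1 as [-> | ->]; destruct H2 as [-> | ->]; split; nra. }
  assert (Hs4 : - (1 / 4) <= sin k <= 1 / 4) by (split; apply Rnot_lt_le; intro C; nra).
  pose proof (sin2_cos2 k) as Hsc. unfold Rsqr in Hsc.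
  assert (Hc : 3 / 4 <= cos k \/ cos k <= - (3 / 4)).
  { destruct (Rle_dec (3 / 4) (cos k)); auto. right. apply Rnot_lt_le. intro C. nra. }
  pose proof (COS_bound (4 * e * k)).
  assert (Hks : - (k / 4) <= k * sin k <= k / 4) by (split; nra).
  destruct H1 as [-> | ->]; destruct H2 as [-> | ->]; destruct Hc; nra.
Qed.

Definition Q_root_indicator (s1 s2 e k : R) : nat :=
  if Req_EM_T (Q s1 s2 e k) 0 then 1 else 0.

Lemma Q_zero_mult_small K e k s1 s2 : small_eps K e -> 0 < k <= K ->
  is_sign s1 -> is_sign s2 -> zero_mult (Q s1 s2 e) k (Q_root_indicator s1 s2 e k).
Proof.
  intros G Hk H1 H2. unfold Q_root_indicator. destruct (Req_EM_T (Q s1 s2 e k) 0) as [Z|N];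
    apply Q_zero_mult; rewrite ?Qder_0; auto.
  - intros j Hj. replace j with O by lia. rewrite Qder_0. exact Z.
  - eapply Qder_1_nonzero_at_root; eauto.
  - intros; lia.
Qed.

Lemma Dm_minus_simple_root N K e l : small_eps K e -> 0 < l -> sqrt l <= K ->
  Dm_minus N 0 0 e l = 0 -> zero_mult (Dm_minus N 0 0 e) l 1.
Proof.
  intros G Hl HK HD. destruct (small_eps_bounds K e G) as [He _].
  set (k := sqrt l) in *. assert (Hk : 0 < k <= K) by (split; [apply sqrt_lt_R0|]; auto).
  assert (HQ : Q4 e k = 0).
  { replace l with (k * k) in HD by (unfold k; rewrite sqrt_sqrt; lra).
    rewrite Dm_minus_sq in HD by lra. unfold Rdiv in HD.
    apply Rmult_integral in HD. destruct HD as [H|H]; auto.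
    exfalso. revert H. apply Rinv_neq_0_compat, pow_nonzero. lra. }
  replace 1%nat with (Q_root_indicator 1 1 e k + Q_root_indicator 1 (-1) e k
    + Q_root_indicator (-1) 1 e k + Q_root_indicator (-1) (-1) e k)%nat.
  { apply Dm_minus_zero_mult; try lra; eapply Q_zero_mult_small; eauto. }
  (* exactly one of the four factors of Q4 vanishes at k *)
  unfold Q_root_indicator. unfold Q4 in HQ.
  repeat destruct Req_EM_T; try reflexivity; exfalso;
  first
    [ repeat (apply Rmult_integral in HQ; destruct HQ as [HQ|HQ]); contradiction
    | match goal with
      | Ha : Q ?a ?b e k = 0, Hb : Q ?c ?d e k = 0 |- _ =>
          destruct (Q_root_sign_unique K e k a b c d G Hk ltac:(auto) ltac:(auto)
                      ltac:(auto) ltac:(auto) Ha Hb); lra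
      end ].
Qed.

Lemma small_eps_intro K e : 4 <= K -> 0 < e < 1 / (16 * (K + 4)) -> small_eps K e.
Proof.
  intros HK [He1 He2]. repeat split; auto.
  apply (Rmult_lt_compat_r (16 * (K + 4))) in He2; [|lra]. field_simplify in He2; lra.
Qed.

Definition window_start (n : nat) : R := INR n * PI + PI / 2.

Lemma window_start_S n : window_start (S n) = window_start n + PI.
Proof. unfold window_start. rewrite S_INR. ring. Qed.

Lemma window_start_pos n : 0 < window_start n.
Proof.
  unfold window_start. pose proof PI_RGT_0. pose proof (pos_INR n).
  assert (0 <= INR n * PI) by (apply Rmult_le_pos; lra). lra.
Qed.

Lemma cos_window_start n : cos (window_start n) = 0.
Proof. apply cos_eq_0_1. exists (Z.of_nat n). rewrite <- INR_IZR_INZ. reflexivity. Qed.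

(* When cos a = 0, Q reduces to (3/(2e)) sin a - s1 a - s2 sin(4ea)/(2e), and
   a <= K << 1/e makes the first term dominate. *)
Lemma Q_sin_pos_at_cos_root K e a s1 s2 : small_eps K e -> 0 < a <= K -> cos a = 0 ->
  is_sign s1 -> is_sign s2 -> 0 < Q s1 s2 e a * sin a.
Proof.
  intros G Ha Hc H1 H2. destruct (small_eps_bounds K e G) as [He HeK].
  assert (Hs : sin a * sin a = 1)
    by (pose proof (sin2_cos2 a) as H; rewrite Hc in H; unfold Rsqr in H; lra).
  unfold Q. rewrite Hc.
  set (B := 1 / (2 * e)).
  assert (HB : 0 < B) by (unfold B; apply Rdiv_lt_0_compat; lra).
  assert (HKe : K < 2 * B) by (unfold B; apply (Rmult_lt_reg_r (2 * e)); [lra|]; field_simplify; lra).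
  pose proof (SIN_bound (4 * e * a)). pose proof (SIN_bound a).
  assert (- B <= B * (sin (4 * e * a) * sin a) <= B).
  { assert (-1 <= sin (4 * e * a) * sin a <= 1) by (split; nra). split; nra. }
  assert (- a <= a * sin a <= a) by (split; nra).
  replace ((3 * a * 0 + 3 / (2 * e) * sin a - s1 * a - s2 / (2 * e) * sin (4 * e * a)) * sin a)
    with (3 * B * (sin a * sin a) - s1 * (a * sin a) - s2 * (B * (sin (4 * e * a) * sin a)))
    by (unfold B, Rdiv; ring).
  rewrite Hs. destruct H1 as [-> | ->]; destruct H2 as [-> | ->]; lra.
Qed.

Lemma Q_root_in_window K e n s1 s2 : small_eps K e -> window_start (S n) <= K ->
  is_sign s1 -> is_sign s2 ->
  exists k, window_start n < k < window_start (S n) /\ Q s1 s2 e k = 0.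
Proof.
  intros G HK H1 H2. rewrite window_start_S in *.
  set (a := window_start n) in *.
  pose proof PI_RGT_0 as Hpi. pose proof (window_start_pos n) as Ha. fold a in Ha.
  assert (Q1 := Q_sin_pos_at_cos_root K e a s1 s2 G ltac:(lra) (cos_window_start n) H1 H2).
  assert (Q2 : 0 < Q s1 s2 e (a + PI) * sin (a + PI)).
  { apply (Q_sin_pos_at_cos_root K); auto; [lra|]. rewrite neg_cos. unfold a.
    rewrite cos_window_start. ring. }
  rewrite neg_sin in Q2.
  assert (Hs : sin a * sin a = 1).
  { pose proof (sin2_cos2 a) as Hsc. unfold a in Hsc |- *. rewrite cos_window_start in Hsc.
    unfold Rsqr in Hsc. lra. }
  apply IVT_strict; [apply continuity_Q | lra|].
  assert (Hp : 0 < Q s1 s2 e a * Q s1 s2 e (a + PI) * - (sin a * sin a)).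
  { replace (Q s1 s2 e a * Q s1 s2 e (a + PI) * - (sin a * sin a))
      with ((Q s1 s2 e a * sin a) * (Q s1 s2 e (a + PI) * - sin a)) by ring.
    apply Rmult_lt_0_compat; auto. }
  rewrite Hs in Hp. lra.
Qed.

Lemma Q_root_square_inj K e k k' s1 s2 t1 t2 : small_eps K e -> 0 < k <= K -> 0 < k' <= K ->
  is_sign s1 -> is_sign s2 -> is_sign t1 -> is_sign t2 ->
  Q s1 s2 e k = 0 -> Q t1 t2 e k' = 0 -> k * k = k' * k' -> s1 = t1 /\ s2 = t2.
Proof.
  intros G Hk Hk' H1 H2 H3 H4 Q1 Q2 E.
  assert (k = k') as <- by nra. eapply Q_root_sign_unique; eauto.
Qed.

Section SmallCoupling.

Variables (N : nat) (K e : R).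
Hypothesis small : small_eps K e.

Local Notation D := (Dm_minus N 0 0 e).

Lemma Dm_minus_zero_mult_exists_small l : D l = 0 ->
  exists m, zero_mult D l m.
Proof. apply Dm_minus_zero_mult_exists, (small_eps_bounds K e small). Qed.

Lemma Dm_minus_roots_unbounded_small X : exists y, X < y /\ D y = 0.
Proof. apply Dm_minus_roots_unbounded. apply (small_eps_bounds K e small). Qed.

Lemma Dm_minus_nonzero_nonpos_small y : y <= 0 -> D y <> 0.
Proof. apply Dm_minus_nonzero_nonpos, (small_eps_bounds K e small). Qed.

#[local] Hint Resolve continuity_Dm_minus Dm_minus_zero_mult_exists_small
  Dm_minus_roots_unbounded_small Dm_minus_nonzero_nonpos_small : core.

(* Every window of length pi in the variable k = sqrt l contributes four roots. *)
Lemma Dm_minus_roots_below_window n : window_start n <= K ->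
  forall i, (i < 4 * n)%nat -> zero_seq D 0 i < window_start n ^ 2.
Proof.
  induction n as [|n IH]; intros Hn i Hi; [lia|].
  pose proof (window_start_pos n). pose proof (window_start_pos (S n)).
  assert (Hmono := window_start_S n).
  destruct (Q_root_in_window K e n 1 1 small Hn ltac:(auto) ltac:(auto)) as [k1 [R1 Z1]].
  destruct (Q_root_in_window K e n 1 (-1) small Hn ltac:(auto) ltac:(auto)) as [k2 [R2 Z2]].
  destruct (Q_root_in_window K e n (-1) 1 small Hn ltac:(auto) ltac:(auto)) as [k3 [R3 Z3]].
  destruct (Q_root_in_window K e n (-1) (-1) small Hn ltac:(auto) ltac:(auto)) as [k4 [R4 Z4]].
  destruct (small_eps_bounds K e small) as [He _].
  assert (Hroots : forall x, In x [k1 * k1; k2 * k2; k3 * k3; k4 * k4] ->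
    window_start n ^ 2 < x < window_start (S n) ^ 2 /\ D x = 0).
  { intros x Hx. simpl in Hx.
    repeat destruct Hx as [<-|Hx]; try contradiction; split; try (simpl; split; nra);
    match goal with
    | Z : Q ?a ?b e ?k = 0 |- Dm_minus _ _ _ _ (?k * ?k) = 0 =>
        apply (Dm_minus_sq_root N e k a b); auto; lra
    end. }
  assert (Hnd : NoDup [k1 * k1; k2 * k2; k3 * k3; k4 * k4]).
  { repeat constructor; simpl; intuition;
    match goal with
    | E : ?x * ?x = ?y * ?y, Ha : Q ?a ?b e ?x = 0, Hb : Q ?c ?d e ?y = 0 |- _ =>
        destruct (Q_root_square_inj K e x y a b c d small ltac:(lra) ltac:(lra)
                    ltac:(auto) ltac:(auto) ltac:(auto) ltac:(auto) Ha Hb E); lra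
    end. }
  destruct (Nat.lt_ge_cases i (4 * n)) as [Hi'|Hi'].
  - specialize (IH ltac:(lra) i Hi'). simpl in IH |- *. nra.
  - apply (zero_seq_lt_of_roots _ _ (continuity_Dm_minus N e)
      Dm_minus_zero_mult_exists_small Dm_minus_roots_unbounded_small
      Dm_minus_nonzero_nonpos_small (window_start n ^ 2) _ (4 * n) _ (fun j => IH ltac:(lra) j)
      Hroots Hnd). simpl. lia.
Qed.

Lemma Dm_minus_first_roots n : window_start n <= K ->
  forall i, (i < 4 * n)%nat ->
  zero_order D 0 i = 1%nat /\ 1 < Fm e (zero_seq D 0 i).
Proof.
  intros Hn i Hi. set (l := zero_seq D 0 i).
  assert (Hl : 0 < l) by (eapply zero_seq_pos; eauto).
  assert (Hk : 0 < sqrt l <= K).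
  { split; [apply sqrt_lt_R0; auto|].
    pose proof (Dm_minus_roots_below_window n Hn i Hi) as Hb. fold l in Hb.
    pose proof (window_start_pos n).
    rewrite <- (sqrt_pow2 (window_start n)) in Hn by lra.
    pose proof (sqrt_le_1_alt l (window_start n ^ 2)). lra. }
  split.
  - apply (zero_mult_unique D l); [eapply zero_order_spec; eauto|].
    apply (Dm_minus_simple_root N K e); [exact small | lra | lra | eapply zero_seq_root; eauto].
  - rewrite <- (sqrt_sqrt l) by lra. apply (Fm_gt_1 K); auto.
Qed.

Lemma Dm_minus_enum_spec : enum_zeros D (zero_enum D 0).
Proof. eapply zero_enum_spec; eauto. Qed.

Lemma Dm_minus_enum_prefix n : window_start n <= K ->
  forall j, (j < 4 * n)%nat -> zero_enum D 0 j = zero_seq D 0 j.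
Proof.
  intro Hn. eapply zero_enum_simple_prefix; eauto.
  intros i Hi. apply (Dm_minus_first_roots n Hn i Hi).
Qed.

Lemma Fm_enum_ge_1 n : window_start n <= K ->
  forall j, (j < 4 * n)%nat -> 1 <= Rabs (Fm e (zero_enum D 0 j)).
Proof.
  intros Hn j Hj. rewrite (Dm_minus_enum_prefix n Hn j Hj).
  destruct (Dm_minus_first_roots n Hn j Hj) as [_ H]. rewrite Rabs_right; lra.
Qed.

Lemma Dm_minus_enum_lt n : window_start n <= K ->
  forall i j, (i < j < 4 * n)%nat -> zero_enum D 0 i < zero_enum D 0 j.
Proof.
  intros Hn i j Hij. rewrite !(Dm_minus_enum_prefix n Hn) by lia.
  eapply zero_seq_lt; eauto. lia.
Qed.

End SmallCoupling.

Lemma vk_nonneg N a k eps l : 1 <= Rabs (Fm eps l) -> 0 <= vk N a k eps l.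
Proof.
  intro H. unfold vk. pose proof (COS_bound (PI * INR k / INR N + a)).
  unfold ck. simpl. nra.
Qed.

(* If |F_-| >= 1 at both ends then v_k >= 0 there for every k, so every
   E^{k,-}, E^{k,+} is the antiperiodic eigenvalue itself, whatever a is. *)
Lemma in_gap_iff N a eps mu n : (1 <= N)%nat ->
  1 <= Rabs (Fm eps (lam_minus mu n)) -> 1 <= Rabs (Fm eps (lam_plus mu n)) ->
  forall lam, in_gap N a eps mu n lam <-> lam_minus mu n < lam < lam_plus mu n.
Proof.
  intros HN Hm Hp lam. unfold in_gap, Defs.Eminus, Defs.Eplus. split.
  - intro H. destruct (H 0%nat ltac:(lia)) as [em [ep [H1 [H2 H3]]]].
    pose proof (vk_nonneg N a 0 eps _ Hm). pose proof (vk_nonneg N a 0 eps _ Hp).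
    destruct H1 as [[_ ->]|[C _]]; [|lra].
    destruct H2 as [[_ ->]|[C _]]; [|lra]. auto.
  - intros H k Hk. exists (lam_minus mu n), (lam_plus mu n).
    repeat split; try lra; left; split; auto; apply vk_nonneg; auto.
Qed.

Theorem proposition3p5 :
  forall Np : nat, (1 <= Np)%nat ->
  forall n0 : nat,
  exists eps0 : R, 0 < eps0 /\
  forall eps : R, 0 < eps < eps0 ->
  exists mu : nat -> R,
    enum_zeros (Dm_minus Np 0 0%nat eps) mu /\
    forall (a : R) (n : nat), (1 <= n <= n0)%nat ->
      (forall lam : R, in_gap Np a eps mu n lam <-> in_gap Np 0 eps mu n lam) /\
      (exists lam : R, in_gap Np 0 eps mu n lam).
Proof.
  intros Np HN n0. set (K := 4 * (INR n0 + 1)). pose proof (pos_INR n0). pose proof PI_4.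
  exists (1 / (16 * (K + 4))). split; [apply Rdiv_lt_0_compat; unfold K; lra|].
  intros eps He.
  assert (G : small_eps K eps) by (apply small_eps_intro; [unfold K; lra | exact He]).
  assert (HK : window_start n0 <= K) by (unfold window_start, K; nra).
  exists (zero_enum (Dm_minus Np 0 0 eps) 0). split; [apply (Dm_minus_enum_spec Np K eps G)|].
  intros a n Hn.
  assert (Hm := Fm_enum_ge_1 Np K eps G n0 HK (4 * (n - 1) + 1) ltac:(lia)).
  assert (Hp := Fm_enum_ge_1 Np K eps G n0 HK (4 * (n - 1) + 2) ltac:(lia)).
  assert (Hlt := Dm_minus_enum_lt Np K eps G n0 HK (4 * (n - 1) + 1) (4 * (n - 1) + 2)
    ltac:(lia)).
  split.
  - intro lam. rewrite !in_gap_iff by auto. tauto.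
  - exists ((lam_minus (zero_enum (Dm_minus Np 0 0 eps) 0) n
      + lam_plus (zero_enum (Dm_minus Np 0 0 eps) 0) n) / 2).
    apply in_gap_iff; auto. unfold lam_minus, lam_plus. lra.
Qed.
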